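(* Let $\mathbb{F}$ be a field of characteristic zero, $n\ge1$, $a\in(\mathbb{F}^* )^n$ and $B\in\mathbb{F}^{n\times n}$ symmetric, and suppose that $G(a,B)$ is twin-free (no two rows of $B$ are equal). Let $k\in\mathbb{N}$ and let $p_{a,B}:\mathbb{F}\mathcal{G}_k\to V^{\otimes k}$ be the linear map defined below. Then (1) the kernel of $p_{a,B}$ on $\mathbb{F}\mathcal{G}_k$ equals the ideal $\mathcal I_k=\{\gamma\in\mathbb{F}\mathcal{G}_k : \hom(\gamma\cdot F,G(a,B))=0\text{ for all }F\in\mathcal{G}_k\}$; and (2) $p_{a,B}(\mathbb{F}\mathcal{G}_k)=(V^{\otimes k})^{\Gamma(a,B)}$, the space of tensors in $V^{\otimes k}$ invariant under the action of $\Gamma(a,B)$.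
   Context: Graphs are finite multigraphs, possibly with loops and multiple edges. $G(a,B)$ is the weighted graph on vertex set $[n]$ with vertex weights $a_i$ and edge weights $B_{i,j}$. For a graph $F$, $\hom(F,G(a,B))=\sum_{\phi:V(F)\to[n]}\prod_{v\in V(F)}a_{\phi(v)}\prod_{uv\in E(F)}B_{\phi(u),\phi(v)}$ (edges with multiplicity), extended linearly to formal linear combinations of graphs. A $k$-labelled graph is a graph in which $k$ distinct vertices are labelled $1,\dots,k$ (we identify these vertices with $[k]$); $\mathcal{G}_k$ is the set of $k$-labelled graphs. For $F_1,F_2\in\mathcal{G}_k$, the product $F_1\cdot F_2\in\mathcal{G}_k$ is obtained from the disjoint union by identifying vertices with the same label; $\mathbb{F}\mathcal{G}_k$ is the corresponding semigroup algebra of finite formal $\mathbb{F}$-linear combinations of $k$-labelled graphs. When applying $\hom$ to a labelled graph the labels are forgotten. Let $V=\mathbb{F}^n$ with standard basis $e_1,\dots,e_n$. The map $p_{a,B}$ is the linear map with $$p_{a,B}(F)=\sum_{\phi:V(F)\to[n]}\Big(\prod_{v\in V(F)\setminus[k]}a_{\phi(v)}\prod_{uv\in E(F)}B_{\phi(u),\phi(v)}\Big)e_{\phi(1)}\otimes\cdots\otimes e_{\phi(k)}$$ for $F\in\mathcal{G}_k$. $\Gamma(a,B)$ is the group of permutations $\gamma$ of $[n]$ with $a_{\gamma(i)}=a_i$ and $B_{\gamma(i),\gamma(j)}=B_{i,j}$ for all $i,j$; it acts on $V^{\otimes k}$ by $\gamma(e_{i_1}\otimes\cdots\otimes e_{i_k})=e_{\gamma(i_1)}\otimes\cdots\otimes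 e_{\gamma(i_k)}$. *)

From HB Require Import structures.
From mathcomp Require Import all_boot all_order all_algebra all_fingroup.
Set Implicit Arguments. Unset Strict Implicit. Unset Printing Implicit Defensive.
Import GRing.Theory.
Local Open Scope ring_scope.

(* A k-labelled multigraph (loops and parallel edges allowed):
   vertex set 'I_(k + nunl), the vertices lshift j (j : 'I_k), i.e. 0..k-1,
   carry the labels 1..k; the nunl other vertices are unlabelled.
   Edges form a finite list of (unordered) vertex pairs, with multiplicity. *)
Record klgraph (k : nat) := KLGraph {
  nunl : nat;
  kedges : seq ('I_(k + nunl) * 'I_(k + nunl)) }.

(* Product F1 . F2: disjoint union, identifying equally-labelled vertices. *)
Definition glue2 (k m1 m2 : nat) (v : 'I_(k + m2)) : 'I_(k + (m1 + m2)) :=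
  match split v with
  | inl j => lshift (m1 + m2) j
  | inr j => rshift k (rshift m1 j)
  end.
Definition glue1 (k m1 m2 : nat) (v : 'I_(k + m1)) : 'I_(k + (m1 + m2)) :=
  match split v with
  | inl j => lshift (m1 + m2) j
  | inr j => rshift k (lshift m2 j)
  end.

Definition kprod (k : nat) (F1 F2 : klgraph k) : klgraph k :=
  @KLGraph k (nunl F1 + nunl F2)
    ([seq (glue1 (nunl F2) e.1, glue1 (nunl F2) e.2) | e <- kedges F1] ++
     [seq (glue2 (nunl F1) e.1, glue2 (nunl F1) e.2) | e <- kedges F2]).

Definition klcomb (F : Type) (k : nat) := seq (F * klgraph k).

(* V^{(x) k} with V = F^n: coordinates indexed by i : 'I_k -> 'I_n,
   the coordinate i being that of e_{i 1} (x) ... (x) e_{i k}. *)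
Notation tensor F n k := {ffun {ffun 'I_k -> 'I_n} -> F}.

Section Hom.
Variables (F : fieldType) (n : nat) (a : 'I_n -> F) (B : 'M[F]_n).

Definition hom (k : nat) (G : klgraph k) : F :=
  \sum_(phi : {ffun 'I_(k + nunl G) -> 'I_n})
     (\prod_(v : 'I_(k + nunl G)) a (phi v)) *
     \prod_(e <- kedges G) B (phi e.1) (phi e.2).

Definition hom_comb (k : nat) (gamma : klcomb F k) (G : klgraph k) : F :=
  \sum_(x <- gamma) x.1 * hom (kprod x.2 G).

Definition pab (k : nat) (G : klgraph k) : tensor F n k :=
  [ffun i : {ffun 'I_k -> 'I_n} =>
    \sum_(phi : {ffun 'I_(k + nunl G) -> 'I_n}
            | [forall j : 'I_k, phi (lshift (nunl G) j) == i j])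
      (\prod_(v : 'I_(nunl G)) a (phi (rshift k v))) *
      \prod_(e <- kedges G) B (phi e.1) (phi e.2)].

Definition pab_comb (k : nat) (gamma : klcomb F k) : tensor F n k :=
  [ffun i => \sum_(x <- gamma) x.1 * pab x.2 i].

Definition Gamma : {set {perm 'I_n}} :=
  [set g : {perm 'I_n} | [forall i, a (g i) == a i] &&
                         [forall i, forall j, B (g i) (g j) == B i j]].

(* gamma (e_{i1} (x) ... (x) e_{ik}) = e_{gamma i1} (x) ... (x) e_{gamma ik} *)
Definition tact (k : nat) (g : {perm 'I_n}) (T : tensor F n k) : tensor F n k :=
  [ffun i : {ffun 'I_k -> 'I_n} => T [ffun j => (g^-1)%g (i j)]].

Definition Gamma_invariant (k : nat) (T : tensor F n k) : Prop :=
  forall g, g \in Gamma -> tact g T = T.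

End Hom.

Definition twin_free (F : fieldType) (n : nat) (B : 'M[F]_n) : Prop :=
  forall i j : 'I_n, row i B = row j B -> i = j.

(* Call [f : [n]^k -> F] representable if [f = p_{a,B}(gamma)] for some [gamma].
   Representable functions form an algebra (gluing multiplies the images under
   [p_{a,B}]) that contains the edge functions [B (i p) (i q)], is closed under
   unlabelling (summing out a label with weight [a]) and, by Lagrange
   interpolation, under [f |-> 1_{f = c}].  With [n] auxiliary labels these
   operations express "the auxiliary labels form an automorphism [s] of G(a,B)
   and the [k] labels carry [s \o x]": by twin-freeness a [B]-preserving map is
   injective and a vertex is determined by its column.  Summing out the
   auxiliary labels shows that [i |-> #{s in Gamma | i = s \o x}] is
   representable.  As [hom(gamma . F)] is the [a]-weighted pairing of
   [p_{a,B}(gamma)] and [p_{a,B}(F)], testing against these functions isolates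
   [|Gamma| a^x p_{a,B}(gamma)(x)], and [|Gamma| != 0] in characteristic 0:
   this gives (1).  Averaging over [Gamma] expresses every invariant tensor
   through the same functions, which gives (2). *)

From Pilot Require Import Defs.
From HB Require Import structures.
From mathcomp Require Import all_boot all_order all_algebra all_fingroup.
From mathcomp Require Import ring.
Set Implicit Arguments. Unset Strict Implicit. Unset Printing Implicit Defensive.
Import GRing.Theory.
Local Open Scope ring_scope.

Section FfunSplit.
Variables (n K m : nat).

Definition joinf (u : {ffun 'I_K -> 'I_n}) (s : {ffun 'I_m -> 'I_n}) :
  {ffun 'I_(K + m) -> 'I_n} :=
  [ffun v => match split v with inl j => u j | inr j => s j end].

Definition lsplitf (phi : {ffun 'I_(K + m) -> 'I_n}) : {ffun 'I_K -> 'I_n} :=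
  [ffun j => phi (lshift m j)].
Definition rsplitf (phi : {ffun 'I_(K + m) -> 'I_n}) : {ffun 'I_m -> 'I_n} :=
  [ffun j => phi (rshift K j)].

Lemma joinf_lshift u s j : joinf u s (lshift m j) = u j.
Proof. by rewrite ffunE (unsplitK (inl _ j)). Qed.

Lemma joinf_rshift u s j : joinf u s (rshift K j) = s j.
Proof. by rewrite ffunE (unsplitK (inr _ j)). Qed.

Lemma splitfK phi : joinf (lsplitf phi) (rsplitf phi) = phi.
Proof.
by apply/ffunP=> v; rewrite ffunE; case: splitP => j Hj;
  rewrite ffunE; congr (phi _); apply: val_inj.
Qed.

Lemma big_joinf (R : nmodType) (f : {ffun 'I_(K + m) -> 'I_n} -> R) :
  \sum_phi f phi = \sum_u \sum_s f (joinf u s).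
Proof.
rewrite pair_big /= (reindex (fun p => joinf p.1 p.2)) //.
exists (fun phi => (lsplitf phi, rsplitf phi)) => [[u s] _|phi _] /=; last first.
  exact: splitfK.
by congr pair; apply/ffunP => j; rewrite ffunE ?joinf_lshift ?joinf_rshift.
Qed.

Lemma prod_joinf (R : comNzSemiRingType) (f : 'I_n -> R) u s :
  \prod_(v : 'I_(K + m)) f (joinf u s v) =
  (\prod_j f (u j)) * \prod_j f (s j).
Proof.
by rewrite big_split_ord; congr (_ * _); apply: eq_bigr => j _;
  rewrite ?joinf_lshift ?joinf_rshift.
Qed.

End FfunSplit.

Section HomTensor.
Variables (F : fieldType) (n : nat) (a : 'I_n -> F) (B : 'M[F]_n).

Definition edge_weight K m (u : {ffun 'I_K -> 'I_n}) (s : {ffun 'I_m -> 'I_n})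
    (E : seq ('I_(K + m) * 'I_(K + m))) : F :=
  \prod_(e <- E) B (joinf u s e.1) (joinf u s e.2).

Lemma pabE k (G : klgraph k) i :
  pab a B G i = \sum_(s : {ffun 'I_(nunl G) -> 'I_n})
     (\prod_v a (s v)) * edge_weight i s (kedges G).
Proof.
rewrite /pab ffunE big_mkcond big_joinf (bigD1 i) //= [X in _ + X]big1 ?addr0.
  apply: eq_bigr => s _.
  have -> : [forall j, joinf i s (lshift (nunl G) j) == i j].
    by apply/forallP => j; rewrite joinf_lshift.
  by congr (_ * _); apply: eq_bigr => v _; rewrite joinf_rshift.
move=> u Hu; apply: big1 => s _.
case: ifP => // /forallP Hi; case/eqP: Hu; apply/ffunP => j.
by rewrite -(joinf_lshift u s) (eqP (Hi j)).
Qed.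

Lemma homE k (G : klgraph k) :
  Defs.hom a B G = \sum_(u : {ffun 'I_k -> 'I_n}) (\prod_j a (u j)) * pab a B G u.
Proof.
rewrite /Defs.hom big_joinf; apply: eq_bigr => u _.
rewrite pabE big_distrr; apply: eq_bigr => s _.
by rewrite prod_joinf -mulrA.
Qed.

Lemma joinf_glue1 k m1 m2 (i : {ffun 'I_k -> 'I_n}) s1 s2 (v : 'I_(k + m1)) :
  joinf i (joinf s1 s2) (glue1 m2 v) = joinf i s1 v.
Proof.
rewrite /glue1; case: splitP => j Hj.
  by rewrite (_ : v = lshift _ j) ?joinf_lshift //; apply: val_inj.
by rewrite (_ : v = rshift _ j) ?joinf_rshift ?joinf_lshift //; apply: val_inj.
Qed.

Lemma joinf_glue2 k m1 m2 (i : {ffun 'I_k -> 'I_n}) s1 s2 (v : 'I_(k + m2)) :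
  joinf i (joinf s1 s2) (glue2 m1 v) = joinf i s2 v.
Proof.
rewrite /glue2; case: splitP => j Hj.
  by rewrite (_ : v = lshift _ j) ?joinf_lshift //; apply: val_inj.
by rewrite (_ : v = rshift _ j) ?joinf_rshift //; apply: val_inj.
Qed.

Lemma pab_kprod k (G1 G2 : klgraph k) i :
  pab a B (kprod G1 G2) i = pab a B G1 i * pab a B G2 i.
Proof.
rewrite !pabE /= big_joinf big_distrlr /=; apply: eq_bigr => s1 _.
apply: eq_bigr => s2 _; rewrite prod_joinf /edge_weight big_cat !big_map /=.
under [X in _ * (X * _)]eq_bigr do rewrite !joinf_glue1.
under [X in _ * (_ * X)]eq_bigr do rewrite !joinf_glue2.
by rewrite -!mulrA; congr (_ * _); rewrite mulrCA.
Qed.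

Lemma pab_combE k (g : klcomb F k) i :
  pab_comb a B g i = \sum_(x <- g) x.1 * pab a B x.2 i.
Proof. by rewrite ffunE. Qed.

Lemma hom_combE k (g : klcomb F k) G :
  hom_comb a B g G =
  \sum_(u : {ffun 'I_k -> 'I_n}) (\prod_j a (u j)) * pab a B G u * pab_comb a B g u.
Proof.
rewrite /hom_comb; under eq_bigr do rewrite homE big_distrr.
rewrite exchange_big; apply: eq_bigr => u _.
rewrite pab_combE big_distrr; apply: eq_bigr => x _ /=.
rewrite pab_kprod; ring.
Qed.

Lemma sum_hom_comb k (d g : klcomb F k) :
  \sum_(y <- d) y.1 * hom_comb a B g y.2 =
  \sum_(u : {ffun 'I_k -> 'I_n}) (\prod_j a (u j)) * pab_comb a B d u * pab_comb a B g u.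
Proof.
under eq_bigr do rewrite hom_combE big_distrr.
rewrite exchange_big; apply: eq_bigr => u _.
rewrite [pab_comb a B d u]pab_combE big_distrr big_distrl.
by apply: eq_bigr => y _ /=; ring.
Qed.

End HomTensor.

Section Representable.
Variables (F : fieldType) (n : nat) (a : 'I_n -> F) (B : 'M[F]_n).

Definition representable k (f : {ffun 'I_k -> 'I_n} -> F) :=
  exists g : klcomb F k, forall i, pab_comb a B g i = f i.

Lemma eq_representable k (f h : {ffun 'I_k -> 'I_n} -> F) :
  f =1 h -> representable f -> representable h.
Proof. by move=> fh [g Hg]; exists g => i; rewrite Hg fh. Qed.

Lemma representable0 k : representable (fun _ : {ffun 'I_k -> 'I_n} => 0).
Proof. by exists [::] => i; rewrite pab_combE big_nil. Qed.

Lemma representableD k (f h : {ffun 'I_k -> 'I_n} -> F) :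
  representable f -> representable h -> representable (fun i => f i + h i).
Proof.
move=> [g1 H1] [g2 H2]; exists (g1 ++ g2) => i.
by rewrite pab_combE big_cat -!pab_combE H1 H2.
Qed.

Lemma representableZ k c (f : {ffun 'I_k -> 'I_n} -> F) :
  representable f -> representable (fun i => c * f i).
Proof.
move=> [g Hg]; exists [seq (c * x.1, x.2) | x <- g] => i.
rewrite pab_combE big_map -Hg pab_combE big_distrr.
by apply: eq_bigr => x _ /=; rewrite mulrA.
Qed.

Lemma representableM k (f h : {ffun 'I_k -> 'I_n} -> F) :
  representable f -> representable h -> representable (fun i => f i * h i).
Proof.
move=> [g1 H1] [g2 H2].
exists [seq (x.1 * y.1, kprod x.2 y.2) | x <- g1, y <- g2] => i.
rewrite -H1 -H2 !pab_combE big_distrlr big_allpairs_dep /=.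
by apply: eq_bigr => x _; apply: eq_bigr => y _; rewrite pab_kprod mulrACA.
Qed.

Lemma representable_cst k c : representable (fun _ : {ffun 'I_k -> 'I_n} => c).
Proof.
exists [:: (c, @KLGraph k 0 [::])] => i.
rewrite pab_combE big_seq1 pabE /= (eq_bigr (fun _ => 1)); last first.
  by move=> s _; rewrite big_ord0 /edge_weight big_nil mulr1.
by rewrite sumr_const card_ffun !card_ord expn0 mulr1.
Qed.

Lemma representable_edge k (p q : 'I_k) :
  representable (fun i : {ffun 'I_k -> 'I_n} => B (i p) (i q)).
Proof.
exists [:: (1, @KLGraph k 0 [:: (lshift 0 p, lshift 0 q)])] => i.
rewrite pab_combE big_seq1 mul1r pabE /= (eq_bigr (fun _ => B (i p) (i q))).
  by rewrite sumr_const card_ffun !card_ord expn0.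
by move=> s _; rewrite big_ord0 /edge_weight big_seq1 mul1r !joinf_lshift.
Qed.

Lemma representable_sum k (I : Type) (r : seq I) (P : pred I)
    (f : I -> {ffun 'I_k -> 'I_n} -> F) :
  (forall x, representable (f x)) ->
  representable (fun i => \sum_(x <- r | P x) f x i).
Proof.
move=> Hf; elim: r => [|x r IHr].
  by apply: eq_representable (@representable0 k) => i; rewrite big_nil.
case Px: (P x); last by apply: eq_representable IHr => i; rewrite big_cons Px.
by apply: eq_representable (representableD (Hf x) IHr) => i; rewrite big_cons Px.
Qed.

Lemma representable_prod k (I : Type) (r : seq I) (P : pred I)
    (f : I -> {ffun 'I_k -> 'I_n} -> F) :
  (forall x, representable (f x)) ->
  representable (fun i => \prod_(x <- r | P x) f x i).
Proof.
move=> Hf; elim: r => [|x r IHr].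
  by apply: eq_representable (representable_cst k 1) => i; rewrite big_nil.
case Px: (P x); last by apply: eq_representable IHr => i; rewrite big_cons Px.
by apply: eq_representable (representableM (Hf x) IHr) => i; rewrite big_cons Px.
Qed.

(* The indicator of [f i = c] is a polynomial in [f i]: Lagrange interpolation
   through the finitely many values taken by [f]. *)
Lemma representable_eq k (f : {ffun 'I_k -> 'I_n} -> F) c :
  representable f -> representable (fun i => (f i == c)%:R).
Proof.
move=> Hf; pose vals := [seq f i | i : {ffun 'I_k -> 'I_n}].
have : representable (fun i => \prod_(d <- vals | d != c) ((c - d)^-1 * (f i - d))).
  apply: representable_prod => d; apply: representableZ.
  exact: representableD Hf (representable_cst k _).
apply: eq_representable => i; case: eqP => [->|fi_neq].
  by rewrite big1_seq // => d /andP[d_neq _]; rewrite mulVf // subr_eq0 eq_sym.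
apply/eqP; rewrite prodf_seq_eq0; apply/hasP; exists (f i); first exact: codom_f.
by rewrite subrr mulr0 eqxx andbT; apply/eqP.
Qed.

Lemma representable_forall k (T : finType) (P : T -> pred {ffun 'I_k -> 'I_n}) :
  (forall x, representable (fun i => (P x i)%:R)) ->
  representable (fun i => [forall x, P x i]%:R).
Proof.
move=> HP; apply: eq_representable (representable_prod (index_enum T) xpredT HP).
move=> i; case: (boolP [forall x, P x i]) => [/forallP Pi|].
  by rewrite big1 // => x _; rewrite Pi.
by rewrite negb_forall => /existsP[x /negbTE Px]; rewrite (bigD1 x) //= Px mul0r.
Qed.

Lemma representable_andb k (P Q : pred {ffun 'I_k -> 'I_n}) :
  representable (fun i => (P i)%:R) -> representable (fun i => (Q i)%:R) ->
  representable (fun i => (P i && Q i)%:R).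
Proof.
move=> HP HQ; apply: eq_representable (representableM HP HQ) => i.
by rewrite -natrM mulnb.
Qed.

(* [unlabel G] forgets the last [m] labels; they become the first [m]
   unlabelled vertices. *)
Definition unlabel_vertex K m m' (v : 'I_(K + m + m')) : 'I_(K + (m + m')) :=
  cast_ord (esym (addnA K m m')) v.

Definition unlabel K m (G : klgraph (K + m)) : klgraph K :=
  @KLGraph K (m + nunl G)
    [seq (unlabel_vertex e.1, unlabel_vertex e.2) | e <- kedges G].

Lemma joinf_unlabel_vertex K m m' u t s (v : 'I_(K + m + m')) :
  joinf u (@joinf n m m' t s) (unlabel_vertex v) = joinf (@joinf n K m u t) s v.
Proof.
case: (splitP v) => [w Hw|w Hw]; last first.
  rewrite (_ : v = rshift (K + m) w) ?joinf_rshift; last exact: val_inj.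
  rewrite (_ : unlabel_vertex _ = rshift K (rshift m w)) ?joinf_rshift //.
  by apply: val_inj; rewrite /= addnA.
rewrite (_ : v = lshift m' w) ?joinf_lshift; last exact: val_inj.
case: (splitP w) => [j Hj|j Hj].
  rewrite (_ : w = lshift m j) ?joinf_lshift; last exact: val_inj.
  by rewrite (_ : unlabel_vertex _ = lshift (m + m') j) ?joinf_lshift //; apply: val_inj.
rewrite (_ : w = rshift K j) ?joinf_rshift; last exact: val_inj.
rewrite (_ : unlabel_vertex _ = rshift K (lshift m' j)) ?joinf_rshift ?joinf_lshift //.
exact: val_inj.
Qed.

Lemma pab_unlabel K m (G : klgraph (K + m)) u :
  pab a B (unlabel G) u =
  \sum_(t : {ffun 'I_m -> 'I_n}) (\prod_l a (t l)) * pab a B G (joinf u t).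
Proof.
rewrite pabE /= big_joinf; apply: eq_bigr => t _.
rewrite pabE big_distrr; apply: eq_bigr => s _.
rewrite prod_joinf -mulrA /edge_weight big_map; congr (_ * (_ * _)).
by apply: eq_bigr => e _; rewrite !joinf_unlabel_vertex.
Qed.

Lemma representable_unlabel K m (f : {ffun 'I_(K + m) -> 'I_n} -> F) :
  representable f ->
  representable (fun u : {ffun 'I_K -> 'I_n} =>
    \sum_(t : {ffun 'I_m -> 'I_n}) (\prod_l a (t l)) * f (joinf u t)).
Proof.
move=> [g Hg]; exists [seq (x.1, unlabel x.2) | x <- g] => u.
under eq_bigr do rewrite -Hg pab_combE big_distrr.
rewrite pab_combE big_map exchange_big /=; apply: eq_bigr => x _.
rewrite pab_unlabel big_distrr; apply: eq_bigr => t _.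
by rewrite mulrCA.
Qed.

End Representable.

Section Automorphisms.
Variables (F : fieldType) (n : nat) (a : 'I_n -> F) (B : 'M[F]_n).

Definition actf k (s : {perm 'I_n}) (i : {ffun 'I_k -> 'I_n}) :
  {ffun 'I_k -> 'I_n} := [ffun p => s (i p)].

Lemma GammaP (s : {perm 'I_n}) :
  reflect ({mono s : x / a x} /\ {mono s : x y / B x y}) (s \in Gamma a B).
Proof.
rewrite inE; apply: (iffP andP) => [[/forallP Ha /forallP HB]|[Ha HB]].
  by split=> [x|x y]; [apply/eqP|have /forallP/(_ y)/eqP := HB x].
by split; apply/forallP => x; [apply/eqP|apply/forallP => y; apply/eqP].
Qed.

Lemma GammaV s : s \in Gamma a B -> (s^-1)%g \in Gamma a B.
Proof.
move/GammaP => [Ha HB]; apply/GammaP; split=> [x|x y].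
  by rewrite -{2}(permKV s x) Ha.
by rewrite -{2}(permKV s x) -{2}(permKV s y) HB.
Qed.

Lemma pab_actf k (G : klgraph k) s i :
  s \in Gamma a B -> pab a B G (actf s i) = pab a B G i.
Proof.
move/GammaP => [Ha HB]; rewrite !pabE (reindex (actf s)) /=; last first.
  by exists (actf s^-1) => t _; apply/ffunP => v; rewrite !ffunE ?permK ?permKV.
apply: eq_bigr => t _; congr (_ * _); first by apply: eq_bigr => v _; rewrite ffunE Ha.
apply: eq_bigr => e _.
have joinf_actf v : joinf (actf s i) (actf s t) v = s (joinf i t v).
  by rewrite !ffunE; case: (split v) => j; rewrite ffunE.
by rewrite !joinf_actf HB.
Qed.

Definition Gamma_stable k (f : {ffun 'I_k -> 'I_n} -> F) :=
  forall s i, s \in Gamma a B -> f (actf s i) = f i.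

Lemma pab_comb_stable k (g : klcomb F k) : Gamma_stable (pab_comb a B g).
Proof.
by move=> s i Hs; rewrite !pab_combE; apply: eq_bigr => x _; rewrite pab_actf.
Qed.

Lemma Gamma_invariantP k (T : tensor F n k) :
  Gamma_invariant a B T <-> Gamma_stable T.
Proof.
split=> [HT s i /GammaV Hs | HT s Hs].
  by have /ffunP/(_ i) := HT _ Hs; rewrite ffunE invgK.
by apply/ffunP => i; rewrite ffunE (HT (s^-1)%g) // GammaV.
Qed.

Lemma sum_Gamma_stable k (f : {ffun 'I_k -> 'I_n} -> F) x :
  Gamma_stable f -> \sum_(s in Gamma a B) f (actf s x) = #|Gamma a B|%:R * f x.
Proof.
move=> Hf; rewrite mulr_natl -sumr_const.
by apply: eq_bigr => s Hs; rewrite Hf.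
Qed.

Definition orbit_count k (x i : {ffun 'I_k -> 'I_n}) : F :=
  \sum_(s in Gamma a B) (i == actf s x)%:R.

Lemma sum_orbit_count k (f : {ffun 'I_k -> 'I_n} -> F) x :
  \sum_u f u * orbit_count x u = \sum_(s in Gamma a B) f (actf s x).
Proof.
under eq_bigr do rewrite big_distrr.
rewrite exchange_big; apply: eq_bigr => s _.
rewrite (bigD1 (actf s x)) //= eqxx mulr1 big1 ?addr0 // => u /negbTE ->.
by rewrite mulr0.
Qed.

Lemma orbit_countC k (x i : {ffun 'I_k -> 'I_n}) : orbit_count x i = orbit_count i x.
Proof.
rewrite /orbit_count (reindex_inj invg_inj) /=.
apply: eq_big => [s|s _]; first by apply/idP/idP => [/GammaV|/GammaV]; rewrite ?invgK.
suff -> : (i == actf s^-1 x) = (x == actf s i) by [].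
by apply/idP/idP => /eqP ->; apply/eqP/ffunP => p; rewrite !ffunE ?permK ?permKV.
Qed.

End Automorphisms.

Section Gadget.
Variables (F : fieldType) (n : nat) (a : 'I_n -> F) (B : 'M[F]_n).
Hypotheses (B_sym : B^T = B) (B_twin_free : twin_free B).
Variable k : nat.

Lemma B_comm x y : B x y = B y x.
Proof. by rewrite -{1}B_sym mxE. Qed.

Lemma eq_of_B_rows x y : (forall l, B x l = B y l) -> x = y.
Proof. by move=> Bxy; apply: B_twin_free; apply/rowP => l; rewrite !mxE. Qed.

Lemma B_mono_inj (t : 'I_n -> 'I_n) : {mono t : x y / B x y} -> injective t.
Proof. by move=> tB x y txy; apply: eq_of_B_rows => l; rewrite -tB txy tB. Qed.

Lemma B_mono_col (s : {perm 'I_n}) v j :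
  {mono s : x y / B x y} -> [forall l, B (s l) v == B l j] = (v == s j).
Proof.
move=> sB; apply/forallP/eqP => [colv|->]; last by move=> l; rewrite sB.
rewrite -(permKV s v); congr (s _); apply: eq_of_B_rows => l.
by rewrite B_comm -sB permKV (eqP (colv l)) B_comm.
Qed.

(* Labelled vertices carry no weight: [a (s j)] is read off through an
   unlabelled vertex that the auxiliary labels [k + l] force to be [s j]. *)
Definition pinned_weight j (u : {ffun 'I_(k + n) -> 'I_n}) : F :=
  \sum_(w : {ffun 'I_1 -> 'I_n}) (\prod_l a (w l)) *
    [forall l, B (joinf u w (lshift 1 (rshift k l)))
                 (joinf u w (rshift (k + n) ord0)) == B l j]%:R.

Lemma pinned_weight_perm (s : {perm 'I_n}) (u : {ffun 'I_(k + n) -> 'I_n}) j :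
  {mono s : x y / B x y} -> (forall l, u (rshift k l) = s l) ->
  pinned_weight j u = a (s j).
Proof.
move=> sB us; rewrite /pinned_weight (reindex (fun v => [ffun _ : 'I_1 => v])) /=.
  have pin v : [forall l, B (joinf u [ffun=> v] (lshift 1 (rshift k l)))
                 (joinf u [ffun=> v] (rshift (k + n) ord0)) == B l j] = (v == s j).
    rewrite -(B_mono_col _ _ sB); apply: eq_forallb => l.
    by rewrite joinf_lshift joinf_rshift us ffunE.
  under eq_bigr do rewrite big_ord1 ffunE pin.
  rewrite (bigD1 (s j)) //= eqxx mulr1 big1 ?addr0 // => v /negbTE ->.
  by rewrite mulr0.
exists (fun w : {ffun 'I_1 -> 'I_n} => w ord0) => [v _|w _]; first by rewrite ffunE.
by apply/ffunP => o /=; rewrite ffunE (ord1 o).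
Qed.

Lemma representable_pinned_weight j : representable a B (pinned_weight j).
Proof.
apply: (representable_unlabel (f := fun w => [forall l, B (w (lshift 1 (rshift k l)))
  (w (rshift (k + n) ord0)) == B l j]%:R)).
by apply: representable_forall => l; exact/representable_eq/representable_edge.
Qed.

Definition gadget (x : {ffun 'I_k -> 'I_n}) (u : {ffun 'I_(k + n) -> 'I_n}) :=
  [&& [forall j, forall l, B (u (rshift k j)) (u (rshift k l)) == B j l],
      [forall p, forall l, B (u (lshift n p)) (u (rshift k l)) == B (x p) l] &
      [forall j, pinned_weight j u == a j]].

Lemma representable_gadget x : representable a B (fun u => (gadget x u)%:R).
Proof.
have edge_eq p q c : representable a B (fun u : {ffun 'I_(k + n) -> 'I_n} =>
    (B (u p) (u q) == c)%:R) by exact/representable_eq/representable_edge.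
apply: representable_andb; last apply: representable_andb.
- by do 2![apply: representable_forall => ?]; apply: edge_eq.
- by do 2![apply: representable_forall => ?]; apply: edge_eq.
by apply: representable_forall => j; exact/representable_eq/representable_pinned_weight.
Qed.

Lemma gadget_joinf x i t :
  gadget x (joinf i t) = [exists s in Gamma a B, (t == pval s) && (i == actf s x)].
Proof.
apply/and3P/existsP => [[/forallP tB /forallP ti /forallP ta] | [s]]; last first.
  case/and3P => /GammaP[sa sB] /eqP-> /eqP->; split.
  - by do 2!apply/forallP => ?; rewrite !joinf_rshift pvalE sB.
  - by do 2!apply/forallP => ?; rewrite joinf_lshift joinf_rshift ffunE pvalE sB.
  apply/forallP => j; rewrite (pinned_weight_perm (s := s)) ?sa // => l.
  by rewrite joinf_rshift pvalE.
have {}tB : {mono t : j l / B j l}.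
  by move=> j l; have /forallP/(_ l)/eqP := tB j; rewrite !joinf_rshift.
pose s := perm (B_mono_inj tB).
have sB : {mono s : j l / B j l} by move=> j l; rewrite !permE.
have ts l : joinf i t (rshift k l) = s l by rewrite joinf_rshift permE.
have sa : {mono s : j / a j}.
  by move=> j; rewrite -(pinned_weight_perm j sB ts); apply/eqP.
exists s; apply/and3P; split; first exact/GammaP.
  by apply/eqP/ffunP => l; rewrite pvalE permE.
apply/eqP/ffunP => p; rewrite ffunE; apply: eq_of_B_rows => c.
rewrite -(permKV s c) sB -ts.
by have /forallP/(_ (s^-1 c)%g)/eqP := ti p; rewrite joinf_lshift.
Qed.

End Gadget.

Lemma natr_exists_pval (R : nzSemiRingType) (T : finType) (A : {pred {perm T}})
    (P : pred {perm T}) (t : {ffun T -> T}) :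
  [exists s in A, (t == pval s) && P s]%:R =
  \sum_(s in A) ((t == pval s) && P s)%:R :> R.
Proof.
case: (boolP [exists s in A, _]) => [/existsP[s /andP[sA /andP[/eqP-> Ps]]] | no_s].
  rewrite (bigD1 s) //= eqxx Ps big1 ?addr0 // => s' /andP[_ s'_neq].
  by rewrite (inj_eq val_inj) eq_sym (negbTE s'_neq).
rewrite big1 // => s sA; case: (boolP (_ && _)) => // tsP.
by case/negP: no_s; apply/existsP; exists s; rewrite sA.
Qed.

Section Main.
Variables (F : fieldType) (n : nat) (a : 'I_n -> F) (B : 'M[F]_n).
Hypotheses (B_sym : B^T = B) (B_twin_free : twin_free B).
Hypotheses (a_neq0 : forall i, a i != 0) (Gamma_card : (#|Gamma a B|%:R : F) != 0).
Variable k : nat.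

Lemma prod_a_neq0 (I : finType) (u : I -> 'I_n) : \prod_j a (u j) != 0.
Proof. exact/prodf_neq0. Qed.

Lemma representable_orbit_count (x : {ffun 'I_k -> 'I_n}) :
  representable a B (orbit_count a B x).
Proof.
have := representableZ (\prod_l a l)^-1
  (representable_unlabel (representable_gadget a B x)).
apply: eq_representable => i /=.
under [X in _ * X]eq_bigr do rewrite (gadget_joinf a B_sym B_twin_free) natr_exists_pval big_distrr.
rewrite exchange_big /= /orbit_count big_distrr; apply: eq_bigr => s /GammaP[sa _].
rewrite (bigD1 (pval s)) //= eqxx [X in _ + X]big1 ?addr0; last first.
  by move=> t /negbTE ->; rewrite mulr0.
rewrite [X in _ * (X * _)](eq_bigr (fun l => a l)) ?mulKf ?(prod_a_neq0 id) // => l _.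
by rewrite pvalE sa.
Qed.

Lemma pab_comb_eq0P (g : klcomb F k) :
  pab_comb a B g = 0 <-> forall G, hom_comb a B g G = 0.
Proof.
split=> [g0 G | hom0].
  by rewrite hom_combE big1 // => u _; rewrite g0 [X in _ * X]ffunE mulr0.
apply/ffunP => x; rewrite [RHS]ffunE; have [d dQ] := representable_orbit_count x.
pose w (u : {ffun 'I_k -> 'I_n}) := \prod_j a (u j) * pab_comb a B g u.
have w_stable : Gamma_stable a B w.
  move=> s u Hs; have [sa _] := GammaP a B s Hs.
  by rewrite /w pab_comb_stable //; congr (_ * _); apply: eq_bigr => j _; rewrite ffunE sa.
have : \sum_(u : {ffun 'I_k -> 'I_n}) \prod_j a (u j) * orbit_count a B x u * pab_comb a B g u = 0.
  under eq_bigr do rewrite -dQ.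
  by rewrite -sum_hom_comb big1 // => y _; rewrite hom0 mulr0.
rewrite (eq_bigr (fun u => w u * orbit_count a B x u)) => [|u _]; last by rewrite mulrAC.
rewrite sum_orbit_count sum_Gamma_stable // => /eqP.
by rewrite !mulf_eq0 (negbTE Gamma_card) (negbTE (prod_a_neq0 x)) => /eqP.
Qed.

(* Averaging over [Gamma]: an invariant [T] is [|Gamma|^-1 sum_x T x orbit_count x]. *)
Lemma pab_comb_imageP (T : tensor F n k) :
  (exists g, pab_comb a B g = T) <-> Gamma_invariant a B T.
Proof.
split=> [[g <-] | /Gamma_invariantP T_stable]; first exact/Gamma_invariantP/pab_comb_stable.
have [g Hg] : representable a B (fun i => T i).
  have := representableZ (#|Gamma a B|%:R)^-1 (representable_sum (index_enum _) xpredT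
    (fun x => representableZ (T x) (representable_orbit_count x))).
  apply: eq_representable => i /=.
  under eq_bigr do rewrite orbit_countC.
  by rewrite sum_orbit_count sum_Gamma_stable // mulKf.
by exists g; apply/ffunP.
Qed.

End Main.

Theorem theorem2p1 (F : fieldType) (n : nat) (a : 'I_n -> F) (B : 'M[F]_n)
    (k : nat) :
  [pchar F] =i pred0 -> (0 < n)%N -> (forall i, a i != 0) ->
  B^T = B -> twin_free B ->
  (forall gamma : klcomb F k,
     pab_comb a B gamma = 0 <-> (forall G : klgraph k, hom_comb a B gamma G = 0))
  /\
  (forall T : tensor F n k,
     (exists gamma : klcomb F k, pab_comb a B gamma = T) <-> Gamma_invariant a B T).
Proof.
move=> F_char0 _ a_neq0 B_sym B_twin_free.
have Gamma_card : (#|Gamma a B|%:R : F) != 0.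
  rewrite ((pcharf0P F).1 F_char0) -lt0n; apply/card_gt0P; exists 1%g.
  by apply/GammaP; split=> [x|x y]; rewrite !perm1.
split=> [g | T].
  exact: pab_comb_eq0P.
exact: pab_comb_imageP.
Qed.
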